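(* Let $(V,\mathcal H,\iota,W)$ be an abelian functional theory with set of weights $\Omega$. Suppose $\rho_*$ lies in the relative interior of $\mathrm{conv}(\Omega)$, and let $|\Phi\rangle$ be a minimizer of the pure-state constrained search at $\rho_*$, i.e. $\|\Phi\|=1$, $\iota^*(|\Phi\rangle\langle\Phi|)=\rho_*$, and $\langle\Psi|W|\Psi\rangle\ge\langle\Phi|W|\Phi\rangle$ for every normalized $|\Psi\rangle$ with $\iota^*(|\Psi\rangle\langle\Psi|)=\rho_*$. If $|\delta\rangle$ is a weight vector with $\langle\delta|\Phi\rangle=0$, then $\langle\delta|W|\Phi\rangle=0$.
   Context: A generalized functional theory is a tuple $(V,\mathcal H,\iota,W)$ with $V$ a finite-dimensional real vector space, $\mathcal H$ a finite-dimensional complex Hilbert space, $\iota:V\to i\mathfrak u(\mathcal H)$ linear into the Hermitian operators, $W$ Hermitian; it is abelian if all $\iota(v)$ commute. States are linear functionals via the trace and $\iota^*$ is the dual map, $\langle\iota^*(\Gamma),v\rangle=\mathrm{Tr}(\Gamma\iota(v))$. A weight is $\alpha\in V^*$ such that some nonzero $\psi$ satisfies $\iota(v)\psi=\langle\alpha,v\rangle\psi$ for all $v$; such a nonzero $\psi$ is a weight vector. $\Omega$ is the set of weights. *)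

(* R : realType (the reals), C := R[i] (the complex numbers,
   from mathcomp-real-closed).  V = R^m (coordinates fixed), V^* = R^m via the
   standard pairing, H = C^n (column vectors). *)
From HB Require Import structures.
From mathcomp Require Import all_boot all_order all_algebra.
From mathcomp Require Import reals complex.
Set Implicit Arguments. Unset Strict Implicit. Unset Printing Implicit Defensive.
Import Order.TTheory GRing.Theory Num.Theory.
Local Open Scope ring_scope.
Local Open Scope complex_scope.

Section FT.
Variables (R : realType) (m n : nat).
Local Notation C := (R[i]).

Definition adj (p q : nat) (A : 'M[C]_(p, q)) : 'M[C]_(q, p) :=
  map_mx (@conjc R) A^T.

Definition herm_mx (A : 'M[C]_n) : Prop := adj A = A.

Definition inner (a b : 'cV[C]_n) : C := (adj a *m b) 0 0.

(* the linear map iota : V -> Herm(H), determined by the images A k of the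
   standard basis vectors of V = R^m *)
Definition iota (A : 'I_m -> 'M[C]_n) (v : 'rV[R]_m) : 'M[C]_n :=
  \sum_(k < m) (v 0 k)%:C *: A k.

Definition pairing (a v : 'rV[R]_m) : R := \sum_(k < m) a 0 k * v 0 k.

(* iota^*(Gamma) = rho  :<->  <rho, v> = Tr(Gamma iota(v)) for all v *)
Definition iota_star_is (A : 'I_m -> 'M[C]_n) (G : 'M[C]_n) (rho : 'rV[R]_m)
  : Prop := forall v : 'rV[R]_m, (pairing rho v)%:C = \tr (G *m iota A v).

Definition proj (phi : 'cV[C]_n) : 'M[C]_n := phi *m adj phi.

Definition weight_vector (A : 'I_m -> 'M[C]_n) (alpha : 'rV[R]_m)
  (psi : 'cV[C]_n) : Prop :=
  psi != 0 /\ forall v : 'rV[R]_m, iota A v *m psi = (pairing alpha v)%:C *: psi.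

Definition is_weight (A : 'I_m -> 'M[C]_n) (alpha : 'rV[R]_m) : Prop :=
  exists psi, weight_vector A alpha psi.

Definition conv (S : 'rV[R]_m -> Prop) (x : 'rV[R]_m) : Prop :=
  exists (k : nat) (p : 'I_k -> 'rV[R]_m) (t : 'I_k -> R),
    (forall i, S (p i)) /\ (forall i, 0 <= t i) /\ \sum_(i < k) t i = 1 /\
    x = \sum_(i < k) t i *: p i.

Definition aff (S : 'rV[R]_m -> Prop) (x : 'rV[R]_m) : Prop :=
  exists (k : nat) (p : 'I_k -> 'rV[R]_m) (t : 'I_k -> R),
    (forall i, S (p i)) /\ \sum_(i < k) t i = 1 /\
    x = \sum_(i < k) t i *: p i.

Definition dist2 (x y : 'rV[R]_m) : R := \sum_(k < m) (x 0 k - y 0 k) ^+ 2.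

Definition relint (S : 'rV[R]_m -> Prop) (x : 'rV[R]_m) : Prop :=
  S x /\ exists e : R, 0 < e /\
    forall y, aff S y -> dist2 y x < e ^+ 2 -> S y.

End FT.

(* Suppose <delta|W|Phi> <> 0.  Since rho lies in the relative interior of
   conv(Omega), it is a convex combination sum_b T_b b of pairwise distinct
   weights in which the weight alpha of delta has a positive coefficient.
   Weight vectors of distinct weights are orthogonal, so G = sum_b c_b f_b,
   with f_b a weight vector of weight b and f_alpha = delta, has
   <G|G> = 1 and <G|A_k G> = rho_k as soon as |c_b|^2 <f_b|f_b> = T_b.  The
   phases of the c_b can moreover be chosen so that Re<Phi|G> and all
   Re<Phi|A_k G> vanish while Re<Phi|W G> < 0; the latter uses
   <Phi|delta> = 0 and <Phi|W delta> <> 0.  Then Phi + x G, renormalised, is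
   admissible for every x > 0, and its energy is below that of Phi for small
   x. *)

From Pilot Require Import Defs.
From HB Require Import structures.
From mathcomp Require Import all_boot all_order all_algebra.
From mathcomp Require Import reals complex boolp.
From mathcomp Require Import ring lra.
Import Order.TTheory GRing.Theory Num.Theory.
Local Open Scope ring_scope.
Local Open Scope complex_scope.
Set Implicit Arguments. Unset Strict Implicit. Unset Printing Implicit Defensive.

Section ComplexFacts.
Variable R : realType.
Implicit Types (a : R) (z y : R[i]).

Lemma ReM_real a z : complex.Re (a%:C * z) = a * complex.Re z.
Proof. by case: z => x w /=; rewrite !mul0r subr0. Qed.

Lemma Re_sum (I : Type) (r : seq I) (P : pred I) (F : I -> R[i]) :
  complex.Re (\sum_(i <- r | P i) F i) = \sum_(i <- r | P i) complex.Re (F i).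
Proof. exact: (raddf_sum (@complex.Re R : Rcomplex R -> R)). Qed.

Lemma ReN z : complex.Re (- z) = - complex.Re z.
Proof. by case: z. Qed.

Lemma conjcM_real a z : conjc (a%:C * z) = a%:C * conjc z.
Proof. by case: z => x w; simpc. Qed.

Lemma conjc_mul_self z : conjc z * z = (complex.Re z ^+ 2 + complex.Im z ^+ 2)%:C.
Proof. by rewrite add_Re2_Im2 sqr_normc mulrC. Qed.

Lemma Re2_Im2_gt0 z : z != 0 -> 0 < complex.Re z ^+ 2 + complex.Im z ^+ 2.
Proof. by move=> z0; rewrite -ltcR add_Re2_Im2 exprn_gt0 // normr_gt0. Qed.

Lemma conjc_fixed_real z : conjc z = z -> z = (complex.Re z)%:C.
Proof. by case: z => x w /= [] w0; congr (_ +i* _); lra. Qed.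

Lemma phase_exists z y : exists2 u, u != 0 &
  [/\ complex.Re (u * z) = 0, complex.Re (u * y) <= 0 &
      (z = 0 -> y != 0 -> complex.Re (u * y) < 0)].
Proof.
have [-> | z0] := eqVneq z 0; last first.
  pose u := 'i * conjc z.
  have Re_uz : complex.Re (u * z) = 0.
    by rewrite /u -mulrA conjc_mul_self mulrC ReM_real mulr0.
  have u0 : u != 0 by rewrite mulf_neq0 ?conjc_eq0 // eq_complex /= oner_eq0 andbF.
  have [Re_uy | Re_uy] := leP (complex.Re (u * y)) 0.
    by exists u => //; split => // z0'; rewrite z0' eqxx in z0.
  exists (- u); rewrite ?oppr_eq0 //; split => [||z0']; rewrite ?mulNr.
  - by rewrite ReN Re_uz oppr0.
  - by rewrite ReN; lra.
  - by rewrite z0' eqxx in z0.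
have [-> | y0] := eqVneq y 0; first by exists 1; rewrite ?oner_eq0 // !mulr0.
exists (- conjc y); first by rewrite oppr_eq0 conjc_eq0.
have Re_uy : complex.Re (- conjc y * y) < 0.
  by rewrite mulNr conjc_mul_self ReN /=; have := Re2_Im2_gt0 y0; lra.
by split=> //; [rewrite mulr0 | exact: ltW].
Qed.

Lemma scaled_phase_exists (N T : R) z y : 0 < N -> 0 <= T -> exists c : R[i],
  [/\ conjc c * c * N%:C = T%:C, complex.Re (c * z) = 0, complex.Re (c * y) <= 0 &
      (z = 0 -> y != 0 -> 0 < T -> complex.Re (c * y) < 0)].
Proof.
move=> N_gt0 T_ge0; have [u u0 [Re_uz Re_uy Re_uy_lt0]] := phase_exists z y.
pose U := complex.Re u ^+ 2 + complex.Im u ^+ 2.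
have U_gt0 : 0 < U := Re2_Im2_gt0 u0.
pose l := Num.sqrt (T / (N * U)).
have l2 : l ^+ 2 = T / (N * U) by rewrite sqr_sqrtr // divr_ge0 // ltW // mulr_gt0.
exists (l%:C * u); split.
- rewrite conjcM_real.
  have -> : l%:C * conjc u * (l%:C * u) * N%:C = (l ^+ 2 * N)%:C * (conjc u * u).
    by rewrite rmorphM rmorphXn /=; ring.
  by rewrite conjc_mul_self -rmorphM /= l2 -/U; congr _%:C; field; rewrite !gt_eqF.
- by rewrite -mulrA ReM_real Re_uz mulr0.
- by rewrite -mulrA ReM_real; apply: mulr_ge0_le0 => //; exact: sqrtr_ge0.
- move=> z0 y0 T_gt0; rewrite -mulrA ReM_real pmulr_rlt0 ?Re_uy_lt0 //.
  by rewrite sqrtr_gt0 divr_gt0 // mulr_gt0.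
Qed.
End ComplexFacts.

Section InnerProduct.
Variables (R : realType) (n : nat).
Implicit Types (u v g : 'cV[R[i]]_n) (M : 'M[R[i]]_n).

Lemma adjD p q (a b : 'M[R[i]]_(p, q)) : adj (a + b) = adj a + adj b.
Proof. by rewrite /adj linearD /= map_mxD. Qed.

Lemma adjZ p q c (a : 'M[R[i]]_(p, q)) : adj (c *: a) = conjc c *: adj a.
Proof. by apply/matrixP => i j; rewrite !mxE rmorphM. Qed.

Lemma adjM p q s (a : 'M[R[i]]_(p, q)) (b : 'M[R[i]]_(q, s)) :
  adj (a *m b) = adj b *m adj a.
Proof. by rewrite /adj trmx_mul map_mxM. Qed.

Lemma innerDr u v g : inner u (v + g) = inner u v + inner u g.
Proof. by rewrite /inner mulmxDr mxE. Qed.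

Lemma innerDl u v g : inner (v + g) u = inner v u + inner g u.
Proof. by rewrite /inner adjD mulmxDl mxE. Qed.

Lemma innerZr u c v : inner u (c *: v) = c * inner u v.
Proof. by rewrite /inner -scalemxAr mxE. Qed.

Lemma innerZl u c v : inner (c *: v) u = conjc c * inner v u.
Proof. by rewrite /inner adjZ -scalemxAl mxE. Qed.

Lemma innerC u v : inner v u = conjc (inner u v).
Proof.
rewrite /inner !mxE rmorph_sum; apply: eq_bigr => j _.
by rewrite !mxE rmorphM /= conjcK mulrC.
Qed.

Lemma inner_sumr (I : Type) (r : seq I) (P : pred I) u (F : I -> 'cV[R[i]]_n) :
  inner u (\sum_(i <- r | P i) F i) = \sum_(i <- r | P i) inner u (F i).
Proof. by rewrite /inner mulmx_sumr summxE. Qed.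

Lemma inner_suml (I : Type) (r : seq I) (P : pred I) u (F : I -> 'cV[R[i]]_n) :
  inner (\sum_(i <- r | P i) F i) u = \sum_(i <- r | P i) inner (F i) u.
Proof.
rewrite innerC inner_sumr rmorph_sum; apply: eq_bigr => i _.
by rewrite /= -innerC.
Qed.

Lemma inner_hermM M u v : herm_mx M -> inner u (M *m v) = inner (M *m u) v.
Proof. by move=> hM; rewrite /inner adjM hM mulmxA. Qed.

Lemma inner_herm_real M u : herm_mx M ->
  inner u (M *m u) = (complex.Re (inner u (M *m u)))%:C.
Proof. by move=> hM; apply: conjc_fixed_real; rewrite -innerC inner_hermM. Qed.

Lemma herm1 : herm_mx (1%:M : 'M[R[i]]_n).
Proof. by apply/matrixP => i j; rewrite !mxE eq_sym; case: (_ == _); simpc. Qed.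

Lemma inner_herm_perturb M u g (x : R) : herm_mx M ->
  inner (u + x%:C *: g) (M *m (u + x%:C *: g)) =
  inner u (M *m u) + (2 * x * complex.Re (inner u (M *m g)))%:C
  + (x ^+ 2)%:C * inner g (M *m g).
Proof.
move=> hM; rewrite mulmxDr -scalemxAr !innerDl !innerDr !innerZl !innerZr.
rewrite conjc_real [inner g (M *m u)]innerC -inner_hermM //.
set z := inner u (M *m g).
have cross : x%:C * z + x%:C * conjc z = (2 * x * complex.Re z)%:C.
  by rewrite -mulrDr addcJ !rmorphM /=; ring.
rewrite rmorphXn /= -cross; ring.
Qed.

Lemma innerZ_real M (a : R) u :
  inner (a%:C *: u) (M *m (a%:C *: u)) = (a ^+ 2)%:C * inner u (M *m u).
Proof. by rewrite -scalemxAr innerZl innerZr conjc_real mulrA -rmorphM. Qed.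

Lemma inner_self_real v : inner v v = (complex.Re (inner v v))%:C.
Proof. by have := inner_herm_real v herm1; rewrite mul1mx. Qed.

Lemma inner_self_gt0 v : v != 0 -> 0 < complex.Re (inner v v).
Proof.
move=> v0; have [j vj0] : exists j, v j 0 != 0.
  apply/existsP; apply: contraR v0 => /existsPn v0; apply/eqP/matrixP => i k.
  by rewrite (ord1 k) mxE; apply/eqP; rewrite -[_ == _]negbK v0.
have Re_inner : complex.Re (inner v v) =
    \sum_i (complex.Re (v i 0) ^+ 2 + complex.Im (v i 0) ^+ 2).
  rewrite /inner mxE Re_sum.
  by apply: eq_bigr => i _; rewrite !mxE conjc_mul_self.
rewrite Re_inner (bigD1 j) //= ltr_pwDl ?Re2_Im2_gt0 //.
by apply: sumr_ge0 => i _; rewrite addr_ge0 ?sqr_ge0.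
Qed.
End InnerProduct.

Arguments herm1 {R n}.

Section Weights.
Variables (R : realType) (m n : nat) (A : 'I_m -> 'M[R[i]]_n).
Hypothesis hA : forall k, herm_mx (A k).

Lemma iota_delta k : Defs.iota A (delta_mx 0 k) = A k.
Proof.
rewrite /Defs.iota (bigD1 k) //= big1 => [|l lk].
  by rewrite mxE !eqxx scale1r addr0.
by rewrite mxE (negbTE lk) andbF scale0r.
Qed.

Lemma pairing_delta (a : 'rV[R]_m) k : pairing a (delta_mx 0 k) = a 0 k.
Proof.
rewrite /pairing (bigD1 k) //= big1 => [|l lk].
  by rewrite mxE !eqxx mulr1 addr0.
by rewrite mxE (negbTE lk) andbF mulr0.
Qed.

Lemma mxtrace_projM (u : 'cV[R[i]]_n) (M : 'M[R[i]]_n) :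
  \tr (proj u *m M) = inner u (M *m u).
Proof. by rewrite /proj -mulmxA mxtrace_mulC /inner /mxtrace big_ord1 mulmxA. Qed.

Lemma weight_vectorP (a : 'rV[R]_m) v :
  weight_vector A a v -> forall k, A k *m v = (a 0 k)%:C *: v.
Proof. by case=> _ av k; rewrite -iota_delta av pairing_delta. Qed.

Lemma iota_star_projP (u : 'cV[R[i]]_n) (rho : 'rV[R]_m) :
  iota_star_is A (proj u) rho <-> forall k, inner u (A k *m u) = (rho 0 k)%:C.
Proof.
split=> [urho k | urho v].
  by rewrite -mxtrace_projM -iota_delta -urho pairing_delta.
rewrite /Defs.iota mulmx_sumr raddf_sum /pairing raddf_sum; apply: eq_bigr => k _ /=.
by rewrite -scalemxAr mxtraceZ mxtrace_projM urho rmorphM mulrC.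
Qed.

Lemma weight_vector_orth (a b : 'rV[R]_m) u v :
  weight_vector A a u -> weight_vector A b v -> a != b -> inner u v = 0.
Proof.
move=> au bv ab.
have [k abk] : exists k, a 0 k != b 0 k.
  apply/existsP; apply: contraR ab => /existsPn ab; apply/eqP/rowP => k.
  by apply/eqP; rewrite -[_ == _]negbK ab.
have : (a 0 k)%:C * inner u v = (b 0 k)%:C * inner u v.
  rewrite -(conjc_real (a 0 k)) -innerZl -(weight_vectorP au) -inner_hermM //.
  by rewrite (weight_vectorP bv) innerZr.
move/eqP; rewrite -subr_eq0 -mulrBl mulf_eq0 subr_eq0 => /orP [|/eqP //].
by move/eqP/complexI/eqP; rewrite (negbTE abk).
Qed.

Variables (r : seq 'rV[R]_m) (f : 'rV[R]_m -> 'cV[R[i]]_n).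
Hypotheses (r_uniq : uniq r) (f_weight : {in r, forall a, weight_vector A a (f a)}).

Lemma inner_weight_combination (c d : 'rV[R]_m -> R[i]) :
  inner (\sum_(a <- r) c a *: f a) (\sum_(a <- r) d a *: f a) =
  \sum_(a <- r) conjc (c a) * d a * inner (f a) (f a).
Proof.
rewrite inner_suml; apply: eq_big_seq => a ar.
rewrite inner_sumr (bigD1_seq a) //= big1_seq ?addr0 => [|b /andP [ba br]].
  by rewrite innerZl innerZr mulrA.
have ab : a != b by rewrite eq_sym.
by rewrite innerZl innerZr (weight_vector_orth (f_weight ar) (f_weight br) ab) !mulr0.
Qed.

Lemma mulmx_weight_combination (c : 'rV[R]_m -> R[i]) k :
  A k *m \sum_(a <- r) c a *: f a = \sum_(a <- r) (c a * (a 0 k)%:C) *: f a.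
Proof.
rewrite mulmx_sumr; apply: eq_big_seq => a ar.
by rewrite -scalemxAr (weight_vectorP (f_weight ar)) scalerA.
Qed.
End Weights.

Section BigUniq.
Variables (V : nmodType) (J : eqType) (r : seq J).
Hypothesis r_uniq : uniq r.

Lemma big_pred1_uniq x (F : J -> V) : x \in r -> \sum_(j <- r | j == x) F j = F x.
Proof. by move=> xr; rewrite -big_filter filter_pred1_uniq // big_seq1. Qed.

Lemma partition_big_uniq (I : finType) (p : I -> J) (F : I -> V) :
  (forall i, p i \in r) -> \sum_(j <- r) \sum_(i | p i == j) F i = \sum_i F i.
Proof.
move=> pr; under eq_bigr do rewrite big_mkcond; rewrite exchange_big /=.
apply: eq_bigr => i _; rewrite -big_mkcond.
by rewrite (eq_bigl (fun j => j == p i)) ?big_pred1_uniq // => j; rewrite eq_sym.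
Qed.
End BigUniq.

Section ConvexHull.
Variables (R : realType) (m : nat) (S : 'rV[R]_m -> Prop).

Lemma conv_self x : S x -> conv S x.
Proof.
move=> Sx; exists 1%N, (fun=> x), (fun=> 1).
by rewrite !big_ord1 scale1r; do !split.
Qed.

Lemma relint_conv_push rho a : relint (conv S) rho -> S a ->
  exists2 s, 0 < s & conv S ((1 + s) *: rho - s *: a).
Proof.
move=> [rho_conv [e [e_gt0 e_ball]]] Sa.
pose D := dist2 rho a.
have D_ge0 : 0 <= D by apply: sumr_ge0 => k _; apply: sqr_ge0.
pose s := e / (D + 1).
have s_gt0 : 0 < s by rewrite divr_gt0 // ltr_pwDr.
exists s => //; apply: e_ball.
  exists 2%N, (fun i : 'I_2 => if i == ord0 then rho else a),
    (fun i : 'I_2 => if i == ord0 then 1 + s else - s).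
  split=> [i|]; first by case: ifP => _; [exact: rho_conv | exact: conv_self].
  by rewrite !big_ord_recl !big_ord0 /= scaleNr !addr0; split=> //; ring.
have -> : dist2 ((1 + s) *: rho - s *: a) rho = s ^+ 2 * D.
  by rewrite /dist2 mulr_sumr; apply: eq_bigr => k _; rewrite !mxE; ring.
have sD : s * (D + 1) = e by rewrite /s mulfVK // gt_eqF // ltr_pwDr.
nra.
Qed.

Lemma relint_conv_pos_coef rho a : relint (conv S) rho -> S a ->
  exists r (T : 'rV[R]_m -> R), [/\ uniq r, a \in r /\ 0 < T a,
    {in r, forall b, S b /\ 0 <= T b}, \sum_(b <- r) T b = 1
    & rho = \sum_(b <- r) T b *: b].
Proof.
move=> rho_int Sa.
have [s s_gt0 [k [p [t [pS [t_ge0 [t_sum pt]]]]]]] := relint_conv_push rho_int Sa.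
have s1_gt0 : 0 < 1 + s by rewrite addr_gt0.
pose r := undup (a :: codom p).
(* rho = (s a + sum_i t_i p_i) / (1 + s); T merges the coefficients of equal
   points. *)
pose T b := (s * (b == a)%:R + \sum_(i | p i == b) t i) / (1 + s).
have r_uniq : uniq r := undup_uniq _.
have ar : a \in r by rewrite mem_undup mem_head.
have pr i : p i \in r by rewrite mem_undup inE codom_f orbT.
have fiber_ge0 b : 0 <= \sum_(i | p i == b) t i by apply: sumr_ge0.
have sumT (V : lmodType R) (F : 'rV[R]_m -> V) :
    \sum_(b <- r) T b *: F b = (1 + s)^-1 *: (s *: F a + \sum_i t i *: F (p i)).
  have -> : s *: F a = \sum_(b <- r) (s * (b == a)%:R) *: F b.
    rewrite (bigD1_seq a) //= eqxx mulr1 big1_seq ?addr0 // => b /andP [ba _].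
    by rewrite (negbTE ba) mulr0 scale0r.
  rewrite -(partition_big_uniq r_uniq _ pr) -big_split scaler_sumr /=.
  apply: eq_bigr => b _; rewrite /T [_ / _]mulrC -[LHS]scalerA scalerDl scaler_suml.
  by congr (_ *: (_ + _)); apply: eq_bigr => i /eqP ->.
exists r, T; split=> //.
- by split=> //; rewrite /T eqxx mulr1 divr_gt0 //; have := fiber_ge0 a; lra.
- move=> b br; split; last by rewrite divr_ge0 ?addr_ge0 ?mulr_ge0 // ltW.
  by move: br; rewrite mem_undup inE => /orP [/eqP -> | /codomP [i ->]].
- have := sumT R^o (fun=> 1).
  rewrite -!scaler_suml t_sum -scalerDl scalerA [s + 1]addrC mulVf ?gt_eqF //.
  by move=> sum1; rewrite -[LHS]mulr1 -[RHS]mulr1; exact: sum1.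
- by rewrite (sumT _ id) -pt [_ + (_ - _)]addrC subrK scalerA mulVf ?scale1r ?gt_eqF.
Qed.
End ConvexHull.

Lemma ge0_of_quadratic_le_linear (R : realFieldType) (b l : R) :
  (forall x, 0 < x -> x ^+ 2 * b <= x * l) -> 0 <= l.
Proof.
move=> small; rewrite leNgt; apply/negP => l_lt0.
pose x := - l / (`|b| + 1).
have x_gt0 : 0 < x by rewrite divr_gt0 ?oppr_gt0 // ltr_wpDl.
have xE : x * (`|b| + 1) = - l by rewrite /x mulfVK // gt_eqF // ltr_wpDl.
have /andP [b_ge _] : - `|b| <= b <= `|b| by rewrite -ler_norml.
have : 0 <= x ^+ 2 * (b + `|b|) by rewrite mulr_ge0 ?sqr_ge0 // -lerBlDr sub0r.
have := small x x_gt0; nra.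
Qed.

Section Minimizer.
Variables (R : realType) (m n : nat) (A : 'I_m -> 'M[R[i]]_n) (W : 'M[R[i]]_n).
Variables (rho : 'rV[R]_m) (Phi : 'cV[R[i]]_n).
Hypotheses (hA : forall k, herm_mx (A k)) (hW : herm_mx W).
Hypotheses (hnorm : inner Phi Phi = 1) (hPhi : iota_star_is A (proj Phi) rho).
Hypothesis hmin : forall Psi : 'cV[R[i]]_n, inner Psi Psi = 1 ->
  iota_star_is A (proj Psi) rho -> inner Phi (W *m Phi) <= inner Psi (W *m Psi).

Lemma minimizer_homogeneous (r : R) Psi : 0 < r -> inner Psi Psi = r%:C ->
    (forall k, inner Psi (A k *m Psi) = (r * rho 0 k)%:C) ->
  r * complex.Re (inner Phi (W *m Phi)) <= complex.Re (inner Psi (W *m Psi)).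
Proof.
move=> r_gt0 Psi_norm Psi_rho.
pose c := (Num.sqrt r)^-1.
have c2r : c ^+ 2 * r = 1 by rewrite exprVn sqr_sqrtr ?ltW // mulVf ?gt_eqF.
have cPsi_norm : inner (c%:C *: Psi) (c%:C *: Psi) = 1.
  have := innerZ_real 1%:M c Psi; rewrite !mul1mx => ->.
  by rewrite Psi_norm -rmorphM c2r.
have cPsi_rho : iota_star_is A (proj (c%:C *: Psi)) rho.
  by apply/iota_star_projP => k; rewrite innerZ_real Psi_rho -rmorphM mulrA c2r mul1r.
have := hmin cPsi_norm cPsi_rho.
rewrite innerZ_real (inner_herm_real Phi hW) (inner_herm_real Psi hW) -rmorphM lecR /=.
by move=> w0_le; rewrite -[X in _ <= X]mul1r -c2r [_ * r]mulrC -mulrA ler_pM2l.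
Qed.

Lemma minimizer_first_order G :
    complex.Re (inner Phi G) = 0 -> (forall k, complex.Re (inner Phi (A k *m G)) = 0) ->
    inner G G = 1 -> (forall k, inner G (A k *m G) = (rho 0 k)%:C) ->
  0 <= complex.Re (inner Phi (W *m G)).
Proof.
move=> PhiG PhiAG G_norm G_rho.
suff : 0 <= 2 * complex.Re (inner Phi (W *m G)) by rewrite pmulr_rge0.
apply: (ge0_of_quadratic_le_linear
  (b := complex.Re (inner Phi (W *m Phi)) - complex.Re (inner G (W *m G)))) => x x_gt0.
have Phi_rho := (iota_star_projP A Phi rho).1 hPhi.
have Psi_norm : inner (Phi + x%:C *: G) (Phi + x%:C *: G) = (1 + x ^+ 2)%:C.
  have := inner_herm_perturb Phi G x herm1; rewrite !mul1mx => ->.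
  by rewrite hnorm PhiG G_norm mulr0 mulr1 rmorphD rmorph1 addr0.
have Psi_rho k : inner (Phi + x%:C *: G) (A k *m (Phi + x%:C *: G)) =
    ((1 + x ^+ 2) * rho 0 k)%:C.
  rewrite inner_herm_perturb // Phi_rho PhiAG G_rho mulr0 -rmorphM -!rmorphD /=.
  by rewrite mulrDl mul1r addr0.
have := minimizer_homogeneous (ltr_pwDl ltr01 (sqr_ge0 x)) Psi_norm Psi_rho.
rewrite inner_herm_perturb // (inner_herm_real Phi hW) (inner_herm_real G hW).
rewrite -rmorphM -!rmorphD /=; nra.
Qed.
End Minimizer.

Section Descent.
Variables (R : realType) (m n : nat) (A : 'I_m -> 'M[R[i]]_n) (W : 'M[R[i]]_n).
Variables (rho : 'rV[R]_m) (Phi : 'cV[R[i]]_n).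
Hypotheses (hA : forall k, herm_mx (A k)) (hW : herm_mx W).
Variables (r : seq 'rV[R]_m) (T : 'rV[R]_m -> R) (a : 'rV[R]_m) (delta : 'cV[R[i]]_n).
Hypotheses (r_uniq : uniq r) (r_weight : {in r, forall b, is_weight A b /\ 0 <= T b}).
Hypotheses (ar : a \in r) (Ta_gt0 : 0 < T a).
Hypotheses (T_sum : \sum_(b <- r) T b = 1) (rhoE : rho = \sum_(b <- r) T b *: b).
Hypotheses (hdelta : weight_vector A a delta) (delta_Phi : inner delta Phi = 0).
Hypothesis delta_WPhi : inner delta (W *m Phi) != 0.

Lemma descent_direction_exists : exists G,
  [/\ complex.Re (inner Phi G) = 0, forall k, complex.Re (inner Phi (A k *m G)) = 0,
      inner G G = 1, forall k, inner G (A k *m G) = (rho 0 k)%:C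
    & complex.Re (inner Phi (W *m G)) < 0].
Proof.
have /choice [g g_weight] : forall b, exists v, b \in r -> weight_vector A b v.
  move=> b; have [br | _] := boolP (b \in r); last by exists 0.
  by have [[v bv] _] := r_weight br; exists v.
pose f b := if b == a then delta else g b.
have f_weight : {in r, forall b, weight_vector A b (f b)}.
  by move=> b br; rewrite /f; case: eqP => [-> | _]; [exact: hdelta | exact: g_weight].
pose N b := complex.Re (inner (f b) (f b)).
have /choice [c c_spec] : forall b, exists c, b \in r -> [/\
    conjc c * c * (N b)%:C = (T b)%:C, complex.Re (c * inner Phi (f b)) = 0,
    complex.Re (c * inner Phi (W *m f b)) <= 0 &
    (inner Phi (f b) = 0 -> inner Phi (W *m f b) != 0 -> 0 < T b ->
       complex.Re (c * inner Phi (W *m f b)) < 0)].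
  move=> b; have [br | _] := boolP (b \in r); last by exists 0.
  have [/inner_self_gt0 N_gt0 _] := f_weight _ br.
  have [c] := scaled_phase_exists (inner Phi (f b)) (inner Phi (W *m f b)) N_gt0 (r_weight br).2.
  by exists c.
have fa : f a = delta by rewrite /f eqxx.
exists (\sum_(b <- r) c b *: f b); split.
- rewrite inner_sumr Re_sum big1_seq // => b /andP [_ br].
  by rewrite innerZr; case: (c_spec b br).
- move=> k; rewrite (mulmx_weight_combination f_weight) inner_sumr Re_sum.
  rewrite big1_seq // => b /andP [_ br].
  by rewrite innerZr mulrAC mulrC ReM_real; case: (c_spec b br) => _ -> _ _; rewrite mulr0.
- rewrite (inner_weight_combination hA r_uniq f_weight) -[1]/(1%:C) -T_sum.
  rewrite rmorph_sum.
  apply: eq_big_seq => b br; rewrite inner_self_real.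
  by case: (c_spec b br).
- move=> k; rewrite (mulmx_weight_combination f_weight).
  rewrite (inner_weight_combination hA r_uniq f_weight).
  rewrite rhoE summxE rmorph_sum; apply: eq_big_seq => b br.
  rewrite mxE rmorphM /= inner_self_real; case: (c_spec b br) => <- _ _ _; ring.
- rewrite mulmx_sumr inner_sumr Re_sum (bigD1_seq a) //=.
  have rest_le0 :
      \sum_(b <- r | b != a) complex.Re (inner Phi (W *m (c b *: f b))) <= 0.
    rewrite big_seq_cond; apply: sumr_le0 => b /andP [br _].
    by rewrite -scalemxAr innerZr; case: (c_spec b br).
  suff : complex.Re (inner Phi (W *m (c a *: f a))) < 0 by lra.
  rewrite -scalemxAr innerZr; case: (c_spec a ar) => _ _ _ -> //; rewrite fa.
    by rewrite innerC delta_Phi conjc0.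
  by rewrite inner_hermM // innerC conjc_eq0.
Qed.
End Descent.

Unset Implicit Arguments.
Set Strict Implicit.

Theorem lemma4p22 (R : realType) (m n : nat)
  (A : 'I_m -> 'M[R[i]]_n) (W : 'M[R[i]]_n)
  (hA : forall k, herm_mx (A k))
  (hcomm : forall k l, A k *m A l = A l *m A k)
  (hW : herm_mx W)
  (rho : 'rV[R]_m)
  (hrho : relint (conv (is_weight A)) rho)
  (Phi : 'cV[R[i]]_n)
  (hnorm : inner Phi Phi = 1)
  (hPhi : iota_star_is A (proj Phi) rho)
  (hmin : forall Psi : 'cV[R[i]]_n, inner Psi Psi = 1 ->
            iota_star_is A (proj Psi) rho ->
            inner Phi (W *m Phi) <= inner Psi (W *m Psi))
  (alpha : 'rV[R]_m) (delta : 'cV[R[i]]_n)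
  (hdelta : weight_vector A alpha delta)
  (horth : inner delta Phi = 0) :
  inner delta (W *m Phi) = 0.
Proof.
apply/eqP; apply/negPn/negP => delta_WPhi.
have [r [T [r_uniq [alpha_r Talpha_gt0] r_weight T_sum rhoE]]] :=
  relint_conv_pos_coef hrho (ex_intro _ delta hdelta).
have [G [PhiG PhiAG G_norm G_rho WG_lt0]] :=
  descent_direction_exists hA hW r_uniq r_weight alpha_r Talpha_gt0 T_sum rhoE
    hdelta horth delta_WPhi.
have := minimizer_first_order hA hW hnorm hPhi hmin PhiG PhiAG G_norm G_rho.
by rewrite leNgt WG_lt0.
Qed.
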